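(* For every edge $S\xrightarrow{i}T$ of $L^{\mathrm{skew}}_{A_{n-1}}(P/Q)$, the numbers $X_{T,S}$ and $Y_{S,T}$ defined below (all of whose denominators are nonzero) are positive rational numbers.
   Context: Fix integers $m\ge n\ge 2$ and weakly decreasing $m$-tuples of nonnegative integers $P=(P_1,\dots,P_m)$ and $Q=(Q_1,\dots,Q_m)$ with $Q_r\le P_r$ for all $r$. The skew shape $P/Q$ is the set of cells $(r,c)$ (row $r$, column $c$, matrix convention) with $Q_r<c\le P_r$; assume no column of $P/Q$ contains more than $n$ cells. $L^{\mathrm{skew}}_{A_{n-1}}(P/Q)$ is the set of semistandard tableaux $T$ of shape $P/Q$ with entries in $\{1,\dots,n\}$ (entries weakly increase left to right along rows and strictly increase top to bottom down columns), partially ordered by $S\le T$ iff $S_{r,c}\ge T_{r,c}$ for every cell $(r,c)$. The Hasse diagram edges are colored: $S\to T$ is a covering iff $S,T$ differ in exactly one cell $(r,c)$ and $S_{r,c}=T_{r,c}+1$; this edge gets color $i:=T_{r,c}\in\{1,\dots,n-1\}$, written $S\xrightarrow{i}T$. GT parallelograms: for $0\le i\le n$ put $C_i:=\{i-(m-1),\dots,i-1,i\}$. To each tableau $T$ associate the integer array $(g_{i,j}(T))_{0\le i\le n,\,j\in C_i}$ defined by $g_{i,i+1-r}(T):=Q_r+|\{c:(r,c)\in P/Q,\ T_{r,c}\le i\}|$ for $1\le r\le m$. (Thus $g_{0,j}=Q_{1-j}$, $g_{n,j}=P_{n+1-j}$, and $\max(g_{i-1,j-1},g_{i+1,j})\le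 g_{i,j}\le\min(g_{i-1,j},g_{i+1,j+1})$ whenever the indices are defined.) One has $S\xrightarrow{i}T$ iff the arrays of $S$ and $T$ agree except at exactly one position $(i,j)$, where $g_{i,j}(T)=g_{i,j}(S)+1$. Edge coefficients: for an edge $S\xrightarrow{i}T$ with differing position $(i,j)$, writing $g_{p,q}:=g_{p,q}(T)$, $$X_{T,S}:=-\frac{\prod_{k\in C_{i+1}}(g_{i,j}-g_{i+1,k}+j-k)}{\prod_{k\in C_i\setminus\{j\}}(g_{i,j}-g_{i,k}+j-k-1)},\qquad Y_{S,T}:=\frac{\prod_{k\in C_{i-1}}(g_{i,j}-g_{i-1,k}+j-k-1)}{\prod_{k\in C_i\setminus\{j\}}(g_{i,j}-g_{i,k}+j-k)}.$$ *)

From HB Require Import structures.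
From mathcomp Require Import all_boot all_order all_algebra.
Set Implicit Arguments. Unset Strict Implicit. Unset Printing Implicit Defensive.
Import Order.TTheory GRing.Theory Num.Theory.

(* Rows r are indexed 1..m, columns c >= 1 (matrix convention).
   P Q : nat -> nat; only the values at r = 1..m are relevant.
   A tableau is a function T : nat -> nat -> nat, T r c being the entry in
   cell (r,c); only its values on the cells of P/Q are relevant. *)

Definition in_shape (m : nat) (P Q : nat -> nat) (r c : nat) : bool :=
  (1 <= r <= m) && (Q r < c <= P r).

Definition skew_data (m n : nat) (P Q : nat -> nat) : Prop :=
  [/\ 2 <= n <= m,
      (forall r, 1 <= r < m -> P r.+1 <= P r),
      (forall r, 1 <= r < m -> Q r.+1 <= Q r),
      (forall r, 1 <= r <= m -> Q r <= P r)
    & (forall c, (\sum_(1 <= r < m.+1 | in_shape m P Q r c) 1 <= n)%N)].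

Definition ssyt (m n : nat) (P Q : nat -> nat) (T : nat -> nat -> nat) : Prop :=
  [/\ (forall r c, in_shape m P Q r c -> 1 <= T r c <= n),
      (forall r c, in_shape m P Q r c -> in_shape m P Q r c.+1 ->
         T r c <= T r c.+1)
    & (forall r c, in_shape m P Q r c -> in_shape m P Q r.+1 c ->
         T r c < T r.+1 c)].

Definition skew_edge (m n : nat) (P Q : nat -> nat)
    (S T : nat -> nat -> nat) (i : nat) : Prop :=
  [/\ ssyt m n P Q S, ssyt m n P Q T &
      exists r c, [/\ in_shape m P Q r c, S r c = (T r c).+1, T r c = i &
        forall r' c', in_shape m P Q r' c' -> (r', c') <> (r, c) ->
          S r' c' = T r' c']].

Definition row_count (P Q : nat -> nat) (T : nat -> nat -> nat) (r i : nat)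
  : nat := (\sum_((Q r).+1 <= c < (P r).+1 | T r c <= i) 1)%N.

(* GT parallelogram entry g_{i,j}(T) for j in C_i = {i-(m-1),...,i};
   g_{i,i+1-r} = Q_r + #{c : (r,c) in P/Q, T_{r,c} <= i}.  (0 outside.) *)
Definition gt_entry (m : nat) (P Q : nat -> nat) (T : nat -> nat -> nat)
    (i : nat) (j : int) : int :=
  let r := ((Posz i) + 1 - j)%R in
  if ((1 <= r) && (r <= (Posz m)))%R
  then Posz (Q `|r|%N + row_count P Q T `|r|%N i)%N else 0%R.

Definition gt_pos (m n i : nat) (j : int) : bool :=
  (i <= n) && (((Posz i) - ((Posz m) - 1) <= j) && (j <= (Posz i)))%R.

Local Open Scope ring_scope.

Definition X_num (m : nat) (g : nat -> int -> int) (i : nat) (j : int) : rat :=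
  \prod_(t < m) ((g i j - g i.+1 ((Posz i) + 1 - (Posz t)) + j - ((Posz i) + 1 - (Posz t)))%:~R).

Definition X_den (m : nat) (g : nat -> int -> int) (i : nat) (j : int) : rat :=
  \prod_(t < m | (Posz i) - (Posz t) != j)
     ((g i j - g i ((Posz i) - (Posz t)) + j - ((Posz i) - (Posz t)) - 1)%:~R).

Definition X_coef m g i j : rat := - (X_num m g i j / X_den m g i j).

Definition Y_num (m : nat) (g : nat -> int -> int) (i : nat) (j : int) : rat :=
  \prod_(t < m)
     ((g i j - g i.-1 ((Posz i) - 1 - (Posz t)) + j - ((Posz i) - 1 - (Posz t)) - 1)%:~R).

Definition Y_den (m : nat) (g : nat -> int -> int) (i : nat) (j : int) : rat :=
  \prod_(t < m | (Posz i) - (Posz t) != j)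
     ((g i j - g i ((Posz i) - (Posz t)) + j - ((Posz i) - (Posz t)))%:~R).

Definition Y_coef m g i j : rat := Y_num m g i j / Y_den m g i j.

From HB Require Import structures.
From mathcomp Require Import all_boot all_order all_algebra.
From mathcomp Require Import zify.
Import Order.TTheory GRing.Theory Num.Theory.

(* Write lam_T(l, r) := g_{l,l+1-r}(T) = Q_r + #{c : T_{r,c} <= l}, the r-th
   part of the shape filled by the entries <= l (counting Q as entries 0).
   1. For a semistandard T, lam_T is "interlacing": nondecreasing in the level
      l and lam_T(l+1, r+1) <= lam_T(l, r) (column strictness); hence it is
      also nonincreasing in r.
   2. An edge S -i-> T changes exactly one part: lam_T(i, r0) =
      lam_S(i, r0) + 1, all other parts at levels <= i+1 agree.
   3. Reindexed by rows, the factors of X and Y with row r <> r0 come in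
      numerator/denominator pairs of the same strict sign (negative for
      r < r0, positive for r > r0), by the inequalities of step 1 applied to
      T or to S.  So each quotient has the sign of its pivot factor (r = r0),
      which is negative for X (cancelled by the minus sign of X) and positive
      for Y. *)

Lemma sub_in_count (A : eqType) (s : seq A) (p q : pred A) :
  {in s, subpred p q} -> count p s <= count q s.
Proof.
move=> pq; rewrite -(@eq_in_count _ (predI p (mem s))) => [|x xs]; last first.
  by rewrite /= xs andbT.
by apply: sub_count => x /andP[px xs]; exact: pq.
Qed.

Lemma count_iota_leq (M a k : nat) :
  count (fun c => c <= M) (iota a k) = minn k (M.+1 - a).
Proof.
elim: k a => [|k IH] a /=; first by rewrite min0n.
by rewrite IH; case: (leqP a M) => h; lia.
Qed.

Definition subshape (P Q : nat -> nat) (T : nat -> nat -> nat) (l r : nat) : nat :=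
  (Q r + row_count P Q T r l)%N.

Lemma subshapeE P Q T l r : subshape P Q T l r =
  (Q r + count (fun c => T r c <= l) (index_iota (Q r).+1 (P r).+1))%N.
Proof. by rewrite /subshape /row_count sum1_count. Qed.

Definition interlacing (m : nat) (lam : nat -> nat -> nat) : Prop :=
  (forall l r, lam l r <= lam l.+1 r) /\
  (forall l r, 1 <= r < m -> lam l.+1 r.+1 <= lam l r).

Lemma interlacing_decr {m lam} : interlacing m lam ->
  forall l r r', 1 <= r <= r' -> r' <= m -> lam l r' <= lam l r.
Proof.
move=> [mono inter] l r; elim=> [|r' IH] Hrr' Hr'm; first by lia.
have [lt_r_r'|-> //] : r < r'.+1 \/ r = r'.+1 by lia.
have step : lam l r'.+1 <= lam l r' by apply: leq_trans (mono l r'.+1) (inter l r' _); lia.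
by apply: leq_trans step (IH _ _); lia.
Qed.

Section SubshapeInterlacing.
Variables (m n : nat) (P Q : nat -> nat) (T : nat -> nat -> nat).
Hypotheses (Hsd : skew_data m n P Q) (HT : ssyt m n P Q T).

Lemma row_sorted r c c' : 1 <= r <= m -> Q r < c -> c <= c' <= P r ->
  T r c <= T r c'.
Proof.
move=> Hr Hc; elim: c' => [|c' IH] /andP[Hcc' Hc'P]; first by lia.
have [lt_c_c'|-> //] : c < c'.+1 \/ c = c'.+1 by lia.
have [_ Hrow _] := HT.
have step : T r c' <= T r c'.+1 by apply: Hrow; rewrite /in_shape Hr /=; lia.
by apply: leq_trans (IH _) step; lia.
Qed.

Lemma subshape_ge l r c : 1 <= r <= m -> Q r < c <= P r -> T r c <= l ->
  c <= subshape P Q T l r.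
Proof.
move=> Hr /andP[HQc HcP] Hcl; rewrite subshapeE.
have : count (fun c' => c' <= c) (index_iota (Q r).+1 (P r).+1) <=
       count (fun c' => T r c' <= l) (index_iota (Q r).+1 (P r).+1).
  apply: sub_in_count => c'; rewrite mem_iota => /andP[lo hi] le_c'_c.
  by apply: leq_trans Hcl; apply: row_sorted; lia.
by rewrite count_iota_leq; lia.
Qed.

(* Column strictness: the cells of row r+1 with entries <= l+1 lie under
   cells of row r with entries <= l. *)
Lemma subshape_interlace l r : 1 <= r < m ->
  subshape P Q T l.+1 r.+1 <= subshape P Q T l r.
Proof.
move=> Hr; have [_ HP HQ _ _] := Hsd; have [_ _ Hcol] := HT.
have HPr := HP r Hr; have HQr := HQ r Hr.
set M := subshape P Q T l r.
have HQM : Q r <= M by rewrite /M subshapeE leq_addr.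
rewrite subshapeE.
have : count (fun c => T r.+1 c <= l.+1) (index_iota (Q r.+1).+1 (P r.+1).+1) <=
       count (fun c => c <= M) (index_iota (Q r.+1).+1 (P r.+1).+1).
  apply: sub_in_count => c; rewrite mem_iota => /andP[lo hi] entry_le /=.
  have Hin : in_shape m P Q r.+1 c by rewrite /in_shape; lia.
  have [//|lt_M_c] := leqP c M.
  have Hin_above : in_shape m P Q r c by rewrite /in_shape; lia.
  have col := Hcol r c Hin_above Hin.
  have : c <= M by apply: subshape_ge; lia.
  by lia.
by rewrite count_iota_leq; lia.
Qed.

Lemma subshape_interlacing : interlacing m (subshape P Q T).
Proof.
split => [l r|]; last exact: subshape_interlace.
rewrite !subshapeE leq_add2l; apply: sub_count => c /=; exact: leqW.
Qed.

End SubshapeInterlacing.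
Arguments subshape_interlacing {m n P Q T}.

Local Open Scope ring_scope.

(* The factors of X and Y for the pivot (i, r0), i.e. j = i+1-r0, indexed by
   rows r = 1..m with lam in place of g: the factor with k = i+2-r of the
   numerator of X_{T,S} is X_num_factor lam i r0 r, the one with k = i+1-r of
   its denominator is X_den_factor lam i r0 r, and similarly for Y_{S,T}
   (numerator k = i-r, denominator k = i+1-r). *)
Definition X_num_factor (lam : nat -> nat -> nat) (i r0 r : nat) : int :=
  Posz (lam i r0) - Posz (lam i.+1 r) + Posz r - Posz r0 - 1.
Definition X_den_factor (lam : nat -> nat -> nat) (i r0 r : nat) : int :=
  Posz (lam i r0) - Posz (lam i r) + Posz r - Posz r0 - 1.
Definition Y_num_factor (lam : nat -> nat -> nat) (i r0 r : nat) : int :=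
  Posz (lam i r0) - Posz (lam i.-1 r) + Posz r - Posz r0.
Definition Y_den_factor (lam : nat -> nat -> nat) (i r0 r : nat) : int :=
  Posz (lam i r0) - Posz (lam i r) + Posz r - Posz r0.

(* At the pivot row the X numerator factor is negative: lam is nondecreasing
   in the level. *)
Lemma X_pivot_neg {m} {lam : nat -> nat -> nat} {i r0} :
  interlacing m lam -> X_num_factor lam i r0 r0 < 0.
Proof. by move=> [mono _]; have := mono i r0; rewrite /X_num_factor; lia. Qed.

Section CoveringSigns.
Variables (m i r0 : nat) (lamS lamT : nat -> nat -> nat).
Hypotheses (intS : interlacing m lamS) (intT : interlacing m lamT).
Hypothesis Hr0 : (1 <= r0 <= m)%N.
Hypothesis bump : lamT i r0 = (lamS i r0).+1.
Hypothesis agree : forall l r, (1 <= r <= m)%N -> (l <= i.+1)%N -> l <> i \/ r <> r0 ->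
  lamT l r = lamS l r.

(* For r < r0 both X factors are negative (T's parts decrease along rows);
   for r > r0 both are positive (S's parts interlace below lam_S(i, r0)). *)
Lemma X_factors_same_sign r : (1 <= r <= m)%N -> r != r0 ->
  0 < X_num_factor lamT i r0 r * X_den_factor lamT i r0 r.
Proof.
move=> Hr Hne; have [monoT _] := intT; have [_ interS] := intS.
rewrite /X_num_factor /X_den_factor.
case: (ltngtP r r0) Hne => // [before|after] _.
  have up := monoT i r.
  have down : (lamT i r0 <= lamT i r)%N by apply: (interlacing_decr intT); lia.
  by rewrite nmulr_rgt0; lia.
case: r Hr after => [|r] Hr after; first by lia.
have inter := interS i r.
have downS : (lamS i r <= lamS i r0)%N by apply: (interlacing_decr intS); lia.
have downS' : (lamS i r.+1 <= lamS i r0)%N by apply: (interlacing_decr intS); lia.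
have eq_up : lamT i.+1 r.+1 = lamS i.+1 r.+1 by apply: agree; lia.
have eq_i : lamT i r.+1 = lamS i r.+1 by apply: agree; lia.
by rewrite pmulr_rgt0; lia.
Qed.

Hypothesis Hi : (0 < i)%N.

Lemma Y_factors_same_sign r : (1 <= r <= m)%N -> r != r0 ->
  0 < Y_num_factor lamT i r0 r * Y_den_factor lamT i r0 r.
Proof.
move=> Hr Hne; have [_ interT] := intT; have [monoS _] := intS.
rewrite /Y_num_factor /Y_den_factor.
case: (ltngtP r r0) Hne => // [before|after] _.
  have inter : (lamT i r.+1 <= lamT i.-1 r)%N.
    by have := interT i.-1 r; rewrite prednK //; apply; lia.
  have down : (lamT i r0 <= lamT i r.+1)%N by apply: (interlacing_decr intT); lia.
  have down' : (lamT i r0 <= lamT i r)%N by apply: (interlacing_decr intT); lia.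
  by rewrite nmulr_rgt0; lia.
have up : (lamS i.-1 r <= lamS i r)%N by have := monoS i.-1 r; rewrite prednK.
have downS : (lamS i r <= lamS i r0)%N by apply: (interlacing_decr intS); lia.
have eq_dn : lamT i.-1 r = lamS i.-1 r by apply: agree; lia.
have eq_i : lamT i r = lamS i r by apply: agree; lia.
by rewrite pmulr_rgt0; lia.
Qed.

(* At the pivot row the Y numerator factor is positive: lam_T(i-1, r0) =
   lam_S(i-1, r0) <= lam_S(i, r0) < lam_T(i, r0). *)
Lemma Y_pivot_pos : 0 < Y_num_factor lamT i r0 r0.
Proof.
have [monoS _] := intS.
have up : (lamS i.-1 r0 <= lamS i r0)%N by have := monoS i.-1 r0; rewrite prednK.
have eq_dn : lamT i.-1 r0 = lamS i.-1 r0 by apply: agree; lia.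
by rewrite /Y_num_factor; lia.
Qed.

End CoveringSigns.
Arguments X_factors_same_sign {m i r0 lamS lamT}.
Arguments Y_factors_same_sign {m i r0 lamS lamT}.
Arguments Y_pivot_pos {m i r0 lamS lamT}.

Lemma pivot_ratio {R : realFieldType} {k : nat} (t0 : 'I_k) (x y : 'I_k -> R) :
  (forall t, t != t0 -> 0 < x t * y t) ->
  \prod_(t | t != t0) y t != 0 /\
  exists2 c, 0 < c & \prod_(t < k) x t / \prod_(t | t != t0) y t = x t0 * c.
Proof.
move=> same_sign.
have quot_pos t : t != t0 -> 0 < x t / y t.
  move=> /same_sign; case: (ltrgtP (y t) 0) => [y_neg|y_pos|->]; last by rewrite mulr0 ltxx.
    by rewrite mulrC nmulr_rgt0 // => x_neg; rewrite nmulr_rgt0 ?invr_lt0.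
  by rewrite mulrC pmulr_rgt0 // => x_pos; rewrite divr_gt0.
split.
  by apply/prodf_neq0 => t /quot_pos; apply: contraTneq => ->; rewrite invr0 mulr0 ltxx.
exists (\prod_(t | t != t0) (x t / y t)); first exact: prodr_gt0.
by rewrite (bigD1 t0) //= big_split /= prodfV mulrA.
Qed.

Lemma row_ratio {k : nat} (t0 : 'I_k) (x y : nat -> int) :
  (forall t : 'I_k, t != t0 -> 0 < x t.+1 * y t.+1) ->
  \prod_(t < k | t != t0) (y t.+1)%:~R != 0 :> rat /\
  exists2 c : rat, 0 < c &
    \prod_(t < k) (x t.+1)%:~R / \prod_(t < k | t != t0) (y t.+1)%:~R = (x t0.+1)%:~R * c.
Proof.
by move=> same_sign; apply: pivot_ratio => t /same_sign; rewrite -intrM ltr0z.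
Qed.

(* Each skew_edge has a color 1 <= i < n: S and T have entries i+1 and i. *)
Lemma edge_color_bounds {m n P Q S T i} :
  skew_edge m n P Q S T i -> (0 < i)%N /\ (i < n)%N.
Proof.
move=> [[HSb _ _] [HTb _ _] [r [c [Hcell HSc HTc _]]]].
by move: (HSb r c Hcell) (HTb r c Hcell); lia.
Qed.

Lemma gt_entry_subshape m P Q T (l r : nat) (j : int) : (1 <= r <= m)%N ->
  j = Posz l + 1 - Posz r -> gt_entry m P Q T l j = Posz (subshape P Q T l r).
Proof.
move=> Hr ->; rewrite /gt_entry.
have -> : Posz l + 1 - (Posz l + 1 - Posz r) = Posz r by lia.
by rewrite absz_nat ifT //; apply/andP; split; lia.
Qed.

Lemma gt_pos_pivot {m n l j} : gt_pos m n l j -> exists t0 : 'I_m, j = Posz l - Posz t0.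
Proof.
move=> /andP[_ /andP[lo hi]].
have lt_m : (`|Posz l - j| < m)%N by lia.
by exists (Ordinal lt_m); rewrite /= gez0_abs; lia.
Qed.

Section Reindexing.
Variables (m : nat) (P Q : nat -> nat) (T : nat -> nat -> nat) (i : nat) (t0 : 'I_m).

Lemma skip_pivot (t : 'I_m) : (Posz i - Posz t != Posz i - Posz t0) = (t != t0).
Proof. by rewrite (inj_eq (addrI _)) eqr_opp eqz_nat. Qed.

Lemma gt_entry_row l (t : 'I_m) (j : int) : j = Posz l - Posz t ->
  gt_entry m P Q T l j = Posz (subshape P Q T l t.+1).
Proof. by move=> ->; apply: gt_entry_subshape; [have := ltn_ord t | ]; lia. Qed.

Lemma X_num_rows : X_num m (gt_entry m P Q T) i (Posz i - Posz t0) =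
  \prod_(t < m) (X_num_factor (subshape P Q T) i t0.+1 t.+1)%:~R.
Proof.
apply: eq_bigr => t _; congr (_%:~R); rewrite /X_num_factor.
by rewrite (gt_entry_row i t0) ?(gt_entry_row i.+1 t); lia.
Qed.

Lemma X_den_rows : X_den m (gt_entry m P Q T) i (Posz i - Posz t0) =
  \prod_(t < m | t != t0) (X_den_factor (subshape P Q T) i t0.+1 t.+1)%:~R.
Proof.
rewrite /X_den (eq_bigl _ _ skip_pivot); apply: eq_bigr => t _; congr (_%:~R).
by rewrite /X_den_factor (gt_entry_row i t0) ?(gt_entry_row i t); lia.
Qed.

Lemma Y_num_rows : (0 < i)%N -> Y_num m (gt_entry m P Q T) i (Posz i - Posz t0) =
  \prod_(t < m) (Y_num_factor (subshape P Q T) i t0.+1 t.+1)%:~R.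
Proof.
move=> Hi; apply: eq_bigr => t _; congr (_%:~R).
by rewrite /Y_num_factor (gt_entry_row i t0) ?(gt_entry_row i.-1 t); lia.
Qed.

Lemma Y_den_rows : Y_den m (gt_entry m P Q T) i (Posz i - Posz t0) =
  \prod_(t < m | t != t0) (Y_den_factor (subshape P Q T) i t0.+1 t.+1)%:~R.
Proof.
rewrite /Y_den (eq_bigl _ _ skip_pivot); apply: eq_bigr => t _; congr (_%:~R).
by rewrite /Y_den_factor (gt_entry_row i t0) ?(gt_entry_row i t); lia.
Qed.

End Reindexing.

Lemma subshape_agree m n P Q (S T : nat -> nat -> nat) (i r0 : nat) (j : int) :
  j = Posz i + 1 - Posz r0 ->
  (forall (i' : nat) (j' : int), gt_pos m n i' j' -> (i', j') <> (i, j) ->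
     gt_entry m P Q T i' j' = gt_entry m P Q S i' j') ->
  forall l r, (1 <= r <= m)%N -> (l <= n)%N -> l <> i \/ r <> r0 ->
  subshape P Q T l r = subshape P Q S l r.
Proof.
move=> -> same l r Hr Hl Hne.
have pos : gt_pos m n l (Posz l + 1 - Posz r) by rewrite /gt_pos Hl /=; lia.
have ne : (l, Posz l + 1 - Posz r) <> (i, Posz i + 1 - Posz r0) by case; lia.
by have := same l _ pos ne; rewrite !(gt_entry_subshape m P Q _ l r _ Hr erefl) => -[].
Qed.

Theorem lemma6p1 (m n : nat) (P Q : nat -> nat)
    (S T : nat -> nat -> nat) (i : nat) (j : int) :
  skew_data m n P Q ->
  skew_edge m n P Q S T i ->
  gt_pos m n i j ->
  gt_entry m P Q T i j = gt_entry m P Q S i j + 1 ->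
  (forall (i' : nat) (j' : int), gt_pos m n i' j' -> (i', j') <> (i, j) ->
     gt_entry m P Q T i' j' = gt_entry m P Q S i' j') ->
  [/\ X_den m (gt_entry m P Q T) i j != 0,
      Y_den m (gt_entry m P Q T) i j != 0,
      0 < X_coef m (gt_entry m P Q T) i j
    & 0 < Y_coef m (gt_entry m P Q T) i j].
Proof.
move=> Hsd edge Hpos Hbump Hsame.
have [i_gt0 i_lt_n] := edge_color_bounds edge.
have [HS HT _] := edge.
have [t0 Ej] := gt_pos_pivot Hpos.
have Hr0 : (1 <= t0.+1 <= m)%N := ltn_ord t0.
have bump : subshape P Q T i t0.+1 = (subshape P Q S i t0.+1).+1.
  by move: Hbump; rewrite Ej !(gt_entry_row m P Q _ i t0) //; lia.
have agree l r : (1 <= r <= m)%N -> (l <= i.+1)%N -> l <> i \/ r <> t0.+1 ->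
    subshape P Q T l r = subshape P Q S l r.
  by move=> *; apply: (subshape_agree m n P Q S T i t0.+1 j _ Hsame); lia.
have intS := subshape_interlacing Hsd HS; have intT := subshape_interlacing Hsd HT.
have [XD [cX cX_pos XE]] := row_ratio t0
  (X_num_factor (subshape P Q T) i t0.+1) (X_den_factor (subshape P Q T) i t0.+1)
  (fun t ne => X_factors_same_sign intS intT Hr0 bump agree t.+1 (ltn_ord t) ne).
have [YD [cY cY_pos YE]] := row_ratio t0
  (Y_num_factor (subshape P Q T) i t0.+1) (Y_den_factor (subshape P Q T) i t0.+1)
  (fun t ne => Y_factors_same_sign intS intT Hr0 bump agree i_gt0 t.+1 (ltn_ord t) ne).
rewrite Ej /X_coef /Y_coef X_num_rows X_den_rows Y_num_rows // Y_den_rows XE YE.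
split => //.
  by rewrite -mulNr mulr_gt0 // oppr_gt0 ltrz0 (X_pivot_neg intT).
by rewrite mulr_gt0 // ltr0z (Y_pivot_pos intS Hr0 bump agree i_gt0).
Qed.
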